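(* Let $d$ and $k$ be integers with $1\le k\le d-1$. There is a constant $C=C(d,k)$ such that for every $d$-dimensional lattice $\Lambda\subseteq\mathbb{R}^d$ with $\lambda_d(\Lambda,B^d)\le1$, writing $\lambda_i=\lambda_i(\Lambda,B^d)$, the set $\Lambda\cap B^d$ can be covered by at most $C(\lambda_k\cdots\lambda_d)^{-1}$ $k$-dimensional linear subspaces of $\mathbb{R}^d$.
   Context: $B^d$ is the closed unit Euclidean ball in $\mathbb{R}^d$ centered at the origin. A $d$-dimensional lattice is the set of all integer linear combinations of $d$ linearly independent vectors of $\mathbb{R}^d$. For a lattice $\Lambda$ and a compact convex body $K$ symmetric about the origin, the $i$th successive minimum is $\lambda_i(\Lambda,K)=\inf\{\lambda\in\mathbb{R}:\dim(\Lambda\cap(\lambda K))\ge i\}$. *)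

From HB Require Import structures.
From mathcomp Require Import all_boot all_order all_algebra.
From mathcomp Require Import classical_sets reals.
Set Implicit Arguments. Unset Strict Implicit. Unset Printing Implicit Defensive.
Import Order.TTheory GRing.Theory Num.Theory.
Local Open Scope ring_scope.
Local Open Scope classical_set_scope.

Definition enorm (R : realType) (d : nat) (v : 'rV[R]_d) : R :=
  Num.sqrt (\sum_(j < d) v 0 j ^+ 2).

(* The lattice generated by the rows of an invertible matrix B:
   all integer combinations z *m B with z an integer row vector. *)
Definition lattice_basis (R : realType) (d : nat) (B : 'M[R]_d) : Prop :=
  B \in unitmx.

Definition in_lattice (R : realType) (d : nat) (B : 'M[R]_d) (v : 'rV[R]_d) : Prop :=
  exists z : 'rV[int]_d, v = map_mx (fun x : int => x%:~R) z *m B.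

(* dim (Lambda ∩ lam B^d) >= i  :<=>  there are i linearly independent
   lattice vectors of Euclidean norm <= lam. *)
Definition dim_ge (R : realType) (d : nat) (B : 'M[R]_d) (lam : R) (i : nat) : Prop :=
  exists M : 'M[R]_(i, d), row_free M /\
    forall j : 'I_i, in_lattice B (row j M) /\ enorm (row j M) <= lam.

Definition succ_min (R : realType) (d : nat) (B : 'M[R]_d) (i : nat) : R :=
  inf [set lam : R | 0 <= lam /\ dim_ge B lam i].

(* A finite family S of k-dimensional linear subspaces (given as row spaces
   of square matrices of rank k) covers Lambda ∩ B^d. *)
Definition covers_ball (R : realType) (d k : nat) (B : 'M[R]_d) (S : seq 'M[R]_d) : Prop :=
  (forall U, U \in S -> \rank U = k) /\
  forall v : 'rV[R]_d, in_lattice B v -> enorm v <= 1 ->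
    exists2 U, U \in S & (v <= U)%MS.

(* Choose greedily lattice vectors v_0, ..., v_(d-1): v_i lies outside the
   span L_i of the previous ones and has norm < 2 m_i, where m_i is the least
   norm of a lattice vector outside L_i; then m_i <= lambda_(i+1) <= 2 m_i.
   Take an orthonormal frame adapted to the flag (L_i).  A nonzero lattice
   vector lies in some L_(j+1) but not in L_j, so its norm is >= m_j; hence
   two lattice vectors whose j-th coordinates differ by less than m_j/(d+1)
   for every j are equal.
   Given a lattice point x of the ball, subtract a lattice vector of L_(k-1)
   so that the residue r has its j-th coordinate in [0, 2 m_j) for j < k-1;
   the remaining coordinates are those of x, in [-1, 1].  The box of sides
   m_j/(d+1) containing r determines r, and x lies in the k-dimensional space
   L_(k-1) + r.  There are O(1) boxes along the first k-1 axes and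
   O(1/m_j) = O(1/lambda_(j+1)) along the others. *)

From HB Require Import structures.
From mathcomp Require Import all_boot all_order all_algebra.
From mathcomp Require Import boolp classical_sets reals.
From mathcomp Require Import zify lra.
Import Order.TTheory GRing.Theory Num.Theory.
Local Open Scope ring_scope.
Local Open Scope classical_set_scope.
Set Implicit Arguments. Unset Strict Implicit.

Section EuclideanNorm.
Variables (R : realType) (d : nat).
Implicit Types (v : 'rV[R]_d) (U : 'M[R]_d).

Lemma enorm_ge0 v : 0 <= enorm v.
Proof. exact: sqrtr_ge0. Qed.

Lemma enorm_sqr v : enorm v ^+ 2 = \sum_(j < d) v 0 j ^+ 2.
Proof. by rewrite sqr_sqrtr // sumr_ge0 // => j _; rewrite sqr_ge0. Qed.

Lemma enorm_sqrE v : enorm v ^+ 2 = (v *m v^T) 0 0.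
Proof. by rewrite enorm_sqr !mxE; apply: eq_bigr => j _; rewrite !mxE expr2. Qed.

Lemma normr_coord_le_enorm v i : `|v 0 i| <= enorm v.
Proof.
rewrite -sqrtr_sqr; apply: ler_wsqrtr; rewrite (bigD1 i) //= lerDl.
by apply: sumr_ge0 => j _; rewrite sqr_ge0.
Qed.

Lemma enormZ a v : enorm (a *: v) = `|a| * enorm v.
Proof.
rewrite /enorm (eq_bigr (fun j => a ^+ 2 * v 0 j ^+ 2)) => [|j _].
  by rewrite -mulr_sumr sqrtrM ?sqr_ge0 // sqrtr_sqr.
by rewrite mxE exprMn.
Qed.

Lemma enorm_gt0 v : v != 0 -> 0 < enorm v.
Proof.
apply: contraNT; rewrite -leNgt => v_le0; apply/eqP/rowP => j; rewrite mxE.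
by apply/normr0_eq0/eqP; rewrite eq_le normr_ge0 (le_trans (normr_coord_le_enorm v j)).
Qed.

Lemma enorm_sqr_le c v : (forall j, `|v 0 j| <= c) -> enorm v ^+ 2 <= c ^+ 2 *+ d.
Proof.
move=> vc; rewrite enorm_sqr -[d in X in _ <= X]card_ord -sumr_const.
apply: ler_sum => j _; rewrite -real_normK ?num_real //.
by rewrite ler_sqr ?nnegrE ?(le_trans _ (vc j)).
Qed.

Lemma enorm_mul_orthogonal U v : U *m U^T = 1%:M -> enorm (v *m U) = enorm v.
Proof.
move=> UU; apply/eqP; rewrite -(@eqrXn2 _ 2) ?enorm_ge0 //.
by rewrite !enorm_sqrE trmx_mul mulmxA -[v *m U *m _]mulmxA UU mulmx1.
Qed.

End EuclideanNorm.

Section Lattice.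
Variables (R : realType) (d : nat) (B : 'M[R]_d).
Local Notation lat := (in_lattice B).
Implicit Types (v w : 'rV[R]_d).

Lemma in_lattice0 : lat 0.
Proof.
exists 0; rewrite (_ : map_mx _ 0 = 0) ?mul0mx //.
by apply/rowP => j; rewrite !mxE.
Qed.

Lemma in_latticeD v w : lat v -> lat w -> lat (v + w).
Proof.
move=> [z ->] [z' ->]; exists (z + z'); rewrite -mulmxDl; congr (_ *m _).
by apply/rowP => j; rewrite !mxE intrD.
Qed.

Lemma in_latticeZ (n : int) v : lat v -> lat (n%:~R *: v).
Proof.
move=> [z ->]; exists (n *: z); rewrite scalemxAl; congr (_ *m _).
by apply/rowP => j; rewrite !mxE intrM.
Qed.

Lemma in_latticeB v w : lat v -> lat w -> lat (v - w).
Proof. by move=> lv /(in_latticeZ (-1)); rewrite scaleN1r; apply: in_latticeD. Qed.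

Lemma in_lattice_row i : lat (row i B).
Proof.
exists (delta_mx 0 i); rewrite rowE; congr (_ *m _).
by apply/rowP => j; rewrite !mxE; case: (_ && _).
Qed.

Hypothesis B_unit : B \in unitmx.

Lemma lattice_discrete : exists2 delta : R, 0 < delta &
  forall v, lat v -> v != 0 -> delta <= enorm v.
Proof.
pose K : R := \sum_(l < d) \sum_(i < d) `|invmx B l i| + 1.
have K_gt0 : 0 < K by rewrite ltr_wpDl // sumr_ge0 // => l _; exact: sumr_ge0.
exists K^-1; first by rewrite invr_gt0.
move=> v [z vE] v_neq0; rewrite -[K^-1]mul1r ler_pdivrMr //.
have [i zi_neq0] : exists i, z 0 i != 0.
  apply/existsP; apply: contraR v_neq0 => /existsPn z0.
  rewrite vE (_ : map_mx _ z = 0) ?mul0mx //.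
  by apply/rowP => j; rewrite !mxE; move/negPn: (z0 j) => /eqP ->.
have zE : map_mx (fun x : int => x%:~R) z = v *m invmx B by rewrite vE mulmxK.
have /le_trans -> // : 1 <= `|(z 0 i)%:~R : R|.
  by rewrite -intr_norm ler1z -gtz0_ge1 normr_gt0.
have -> : (z 0 i)%:~R = (v *m invmx B) 0 i by rewrite -zE mxE.
rewrite mxE; apply: le_trans (ler_norm_sum _ _ _) _.
rewrite mulrDr mulr1 ler_wpDr ?enorm_ge0 // mulr_sumr; apply: ler_sum => l _.
rewrite normrM ler_pM ?normr_ge0 ?normr_coord_le_enorm //.
by rewrite (bigD1 i) //= lerDl sumr_ge0.
Qed.

End Lattice.

Lemma mxrank_addsmx_notsub (R : fieldType) (n : nat) (L : 'M[R]_n) (v : 'rV[R]_n) :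
  ~~ (v <= L)%MS -> \rank (L + v)%MS = (\rank L).+1.
Proof.
move=> vL; apply/eqP; rewrite eqn_leq; apply/andP; split.
  apply: leq_trans (mxrank_adds_leqif L v) _.
  by rewrite -[X in (_ <= X)%N]addn1 leq_add2l rank_leq_row.
have [le_rank eq_rank] := mxrank_leqif_sup (addsmxSl L v).
rewrite ltn_neqAle le_rank andbT eq_rank.
by apply: contra vL => /(submx_trans (addsmxSr L v)).
Qed.

Section SuccessiveMinimaFlag.
Variables (R : realType) (d : nat) (B : 'M[R]_d).
Hypothesis B_unit : B \in unitmx.
Local Notation lat := (in_lattice B).
Implicit Types (L : 'M[R]_d) (v z : 'rV[R]_d).

Definition lattice_outside L := [set z | lat z /\ ~~ (z <= L)%MS].

Definition min_outside L : R := inf (@enorm R d @` lattice_outside L).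

Lemma lattice_outside_nonempty L : (\rank L < d)%N -> lattice_outside L !=set0.
Proof.
move=> rL; apply: contrapT => noz.
have BL : (B <= L)%MS.
  apply/row_subP => i; apply: contrapT => /negP iL; apply: noz.
  by exists (row i B); split => //; apply: in_lattice_row.
by move: (mxrankS BL); rewrite mxrank_unit // leqNgt rL.
Qed.

Lemma min_outside_le L z : lattice_outside L z -> min_outside L <= enorm z.
Proof.
move=> zL; apply: ge_inf; last by exists z.
by exists 0 => _ [y _ <-]; apply: enorm_ge0.
Qed.

Lemma min_outside_gt0 L : (\rank L < d)%N -> 0 < min_outside L.
Proof.
move=> rL; have [delta delta_gt0 delta_le] := lattice_discrete B_unit.
apply: (lt_le_trans delta_gt0); apply: lb_le_inf.
  exact/image_nonempty/lattice_outside_nonempty.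
move=> _ [z [lz zL] <-]; apply: delta_le => //.
by apply: contraNneq zL => ->; rewrite sub0mx.
Qed.

Lemma min_outside_mono L1 L2 : (L1 <= L2)%MS -> (\rank L2 < d)%N ->
  min_outside L1 <= min_outside L2.
Proof.
move=> sL12 rL2; apply: lb_le_inf; first exact/image_nonempty/lattice_outside_nonempty.
move=> _ [z [lz zL2] <-]; apply: min_outside_le; split => //.
by apply: contra zL2 => /submx_trans; apply.
Qed.

Definition next_vec L : 'rV[R]_d :=
  xget 0 [set z | lattice_outside L z /\ enorm z < 2 * min_outside L].

Lemma next_vecP L : (\rank L < d)%N ->
  lattice_outside L (next_vec L) /\ enorm (next_vec L) < 2 * min_outside L.
Proof.
move=> rL; have m_gt0 := min_outside_gt0 rL.
have [_ [z zL <-] z_lt] :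
    exists2 r, (@enorm R d @` lattice_outside L) r & r < 2 * min_outside L.
  apply: inf_lt; first exact/image_nonempty/lattice_outside_nonempty.
  by rewrite ltr_pMl // ltr1n.
by apply: (@xgetPex _ 0 [set z | lattice_outside L z /\ _]); exists z.
Qed.

Fixpoint flag n : 'M[R]_d :=
  if n is n.+1 then (flag n + next_vec (flag n))%MS else 0.

Definition flag_vec n := next_vec (flag n).
Definition flag_min n := min_outside (flag n).

Lemma flag_rank n : (n <= d)%N -> \rank (flag n) = n.
Proof.
elim: n => [|n IHn] nd /=; first by rewrite mxrank0.
have rn : (\rank (flag n) < d)%N by rewrite IHn // ltnW.
by have [[_ nL] _] := next_vecP rn; rewrite mxrank_addsmx_notsub // IHn // ltnW.
Qed.

Lemma flag_mono i j : (i <= j)%N -> (flag i <= flag j)%MS.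
Proof.
elim: j => [|j IHj]; first by rewrite leqn0 => /eqP ->.
rewrite leq_eqVlt => /predU1P[-> | /IHj ij]; first exact: submx_refl.
exact: submx_trans ij (addsmxSl _ _).
Qed.

Lemma flag_vec_sub i j : (i < j)%N -> (flag_vec i <= flag j)%MS.
Proof. by move=> /flag_mono; apply: submx_trans; apply: addsmxSr. Qed.

Lemma flag_full v : (v <= flag d)%MS.
Proof. by apply: submx_full; rewrite /row_full flag_rank. Qed.

Lemma flag_vecP i : (i < d)%N ->
  lattice_outside (flag i) (flag_vec i) /\ enorm (flag_vec i) < 2 * flag_min i.
Proof. by move=> id; apply: next_vecP; rewrite flag_rank // ltnW. Qed.

Lemma flag_min_gt0 i : (i < d)%N -> 0 < flag_min i.
Proof. by move=> id; apply: min_outside_gt0; rewrite flag_rank // ltnW. Qed.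

Lemma flag_min_mono i j : (i <= j)%N -> (j < d)%N -> flag_min i <= flag_min j.
Proof.
by move=> ij jd; apply: min_outside_mono; [apply: flag_mono | rewrite flag_rank // ltnW].
Qed.

Definition flag_basis n : 'M[R]_(n, d) := \matrix_(l < n) flag_vec l.

Lemma flag_sub_basis n : (flag n <= flag_basis n)%MS.
Proof.
elim: n => [|n IHn] /=; first exact: sub0mx.
have vec_sub (l : 'I_n.+1) : (flag_vec l <= flag_basis n.+1)%MS.
  by have := row_sub l (flag_basis n.+1); rewrite rowK.
rewrite addsmx_sub (vec_sub ord_max) andbT.
apply: submx_trans IHn _; apply/row_subP => l; rewrite rowK.
exact: (vec_sub (widen_ord (leqnSn n) l)).
Qed.

Lemma flag_basis_free n : (n <= d)%N -> row_free (flag_basis n).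
Proof.
move=> nd; rewrite /row_free eqn_leq rank_leq_row.
by rewrite -{1}(flag_rank nd) mxrankS ?flag_sub_basis.
Qed.

Lemma dim_ge_flag_min i : (i < d)%N -> dim_ge B (2 * flag_min i) i.+1.
Proof.
move=> id; exists (flag_basis i.+1); split; first exact: flag_basis_free.
move=> l; rewrite rowK; have ld : (l < d)%N by apply: leq_trans id.
have [[lv _] vlt] := flag_vecP ld; split => //.
by rewrite ltW // (lt_le_trans vlt) // ler_pM2l // flag_min_mono // -ltnS.
Qed.

Lemma succ_min_le_flag_min i : (i < d)%N -> succ_min B i.+1 <= 2 * flag_min i.
Proof.
move=> id; apply: ge_inf; first by exists 0 => r [].
by split; [rewrite mulr_ge0 // ltW // flag_min_gt0 | apply: dim_ge_flag_min].
Qed.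

Lemma flag_min_le_succ_min i : (i < d)%N -> flag_min i <= succ_min B i.+1.
Proof.
move=> id; apply: lb_le_inf.
  exists (2 * flag_min i); split; first by rewrite mulr_ge0 // ltW // flag_min_gt0.
  exact: dim_ge_flag_min.
move=> lam [_ [M [M_free Mlam]]].
have [j Mj] : exists j, ~~ (row j M <= flag i)%MS.
  apply: contrapT => noj; have /mxrankS : (M <= flag i)%MS.
    by apply/row_subP => j; apply: contrapT => /negP Mj; apply: noj; exists j.
  by rewrite (eqP M_free) flag_rank ?ltnn // ltnW.
by have [lMj Mj_le] := Mlam j; apply: le_trans Mj_le; apply: min_outside_le.
Qed.

End SuccessiveMinimaFlag.

Lemma submx_mul_eq0 (F : fieldType) (m1 m2 n p : nat)
    (A : 'M[F]_(m1, n)) (L : 'M[F]_(m2, n)) (M : 'M[F]_(n, p)) :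
  (A <= L)%MS -> L *m M = 0 -> A *m M = 0.
Proof. by move=> /submxP[D ->] LM; rewrite -mulmxA LM mulmx0. Qed.

Section AdaptedFrame.
Variables (R : realType) (d : nat) (B : 'M[R]_d).
Hypothesis B_unit : B \in unitmx.
Local Notation flag := (flag B).
Local Notation flag_vec := (flag_vec B).
Implicit Types (v : 'rV[R]_d).

Lemma exists_flag_unit (i : 'I_d) : exists u : 'rV[R]_d,
  [/\ (u <= flag i.+1)%MS, flag i *m u^T = 0 & enorm u = 1].
Proof.
pose K := kermx (flag i)^T.
have rK : \rank K = (d - i)%N by rewrite mxrank_ker mxrank_tr flag_rank // ltnW.
have cap_neq0 : (K :&: flag i.+1)%MS != 0.
  rewrite -mxrank_eq0; apply/eqP => cap0.
  have := mxrank_sum_cap K (flag i.+1); have := rank_leq_row (K + flag i.+1)%MS.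
  by rewrite cap0 rK flag_rank //; move: (ltn_ord i); lia.
pose w := nz_row (K :&: flag i.+1)%MS.
have w_neq0 : w != 0 by rewrite nz_row_eq0.
have wK : (w <= K)%MS by apply: submx_trans (nz_row_sub _) (capmxSl _ _).
have w_flag : (w <= flag i.+1)%MS by apply: submx_trans (nz_row_sub _) (capmxSr _ _).
have w_gt0 := enorm_gt0 w_neq0.
exists ((enorm w)^-1 *: w); split; first exact: scalemx_sub.
  move/sub_kermxP: wK => /(congr1 trmx).
  by rewrite trmx_mul trmxK trmx0 linearZ /= -scalemxAr => ->; rewrite scaler0.
by rewrite enormZ ger0_norm ?invr_ge0 ?ltW // mulVf ?gt_eqF.
Qed.

Definition flag_unit (i : 'I_d) : 'rV[R]_d :=
  xget 0 [set u | [/\ (u <= flag i.+1)%MS, flag i *m u^T = 0 & enorm u = 1]].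

Lemma flag_unitP (i : 'I_d) : [/\ (flag_unit i <= flag i.+1)%MS,
  flag i *m (flag_unit i)^T = 0 & enorm (flag_unit i) = 1].
Proof. exact: xgetPex (exists_flag_unit i). Qed.

Lemma flag_unit_orth (i j : 'I_d) : (i < j)%N -> flag_unit i *m (flag_unit j)^T = 0.
Proof.
move=> ij; have [ui _ _] := flag_unitP i; have [_ uj _] := flag_unitP j.
exact: submx_mul_eq0 (submx_trans ui (flag_mono B ij)) uj.
Qed.

Definition frame : 'M[R]_d := \matrix_i flag_unit i.

Lemma frame_orthogonal : frame *m frame^T = 1%:M.
Proof.
apply/matrixP => i j; rewrite [RHS]mxE.
have -> : (frame *m frame^T) i j = (flag_unit i *m (flag_unit j)^T) 0 0.
  by rewrite !mxE; apply: eq_bigr => l _; rewrite !mxE.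
case: (ltngtP i j) => [ij | ji | /val_inj ->].
- by rewrite flag_unit_orth // mxE -val_eqE /= ltn_eqF.
- rewrite -[_ *m _]trmxK trmx_mul trmxK mxE flag_unit_orth //.
  by rewrite !mxE -val_eqE /= gtn_eqF.
- by rewrite eqxx -enorm_sqrE; have [_ _ ->] := flag_unitP j; rewrite expr1n.
Qed.

Definition coords v : 'rV[R]_d := v *m frame^T.

Lemma coordsB u v j : coords (u - v) 0 j = coords u 0 j - coords v 0 j.
Proof. by rewrite /coords mulmxBl !mxE. Qed.

Lemma coordsZ a v j : coords (a *: v) 0 j = a * coords v 0 j.
Proof. by rewrite /coords -scalemxAl !mxE. Qed.

Lemma coordsE v j : coords v 0 j = (v *m (flag_unit j)^T) 0 0.
Proof. by rewrite !mxE; apply: eq_bigr => l _; rewrite !mxE. Qed.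

Lemma enorm_coords v : enorm (coords v) = enorm v.
Proof.
by apply: enorm_mul_orthogonal; rewrite trmxK; apply: mulmx1C frame_orthogonal.
Qed.

Lemma normr_coords_le v j : `|coords v 0 j| <= enorm v.
Proof. by rewrite -enorm_coords normr_coord_le_enorm. Qed.

Lemma coords_flag_eq0 v n (j : 'I_d) :
  (v <= flag n)%MS -> (n <= j)%N -> coords v 0 j = 0.
Proof.
move=> vn nj; have [_ uj _] := flag_unitP j.
by rewrite coordsE (submx_mul_eq0 (submx_trans vn (flag_mono B nj)) uj) mxE.
Qed.

Lemma flag_coords_eq0 v n : (forall j : 'I_d, (n <= j)%N -> coords v 0 j = 0) ->
  (v <= flag n)%MS.
Proof.
move=> vn; have -> : v = coords v *m frame.
  by rewrite /coords -mulmxA (mulmx1C frame_orthogonal) mulmx1.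
rewrite mulmx_sum_row; apply: summx_sub => j _.
have [nj | jn] := leqP n j; first by rewrite vn // scale0r sub0mx.
apply: scalemx_sub; rewrite rowK; have [uj _ _] := flag_unitP j.
exact: submx_trans uj (flag_mono B jn).
Qed.

Lemma flag_vec_coord_neq0 (j : 'I_d) : coords (flag_vec j) 0 j != 0.
Proof.
have [[_ vj] _] := flag_vecP B_unit (ltn_ord j); apply: contra vj => /eqP vj0.
apply: flag_coords_eq0 => i; rewrite leq_eqVlt => /predU1P[/val_inj <- // | ji].
exact: coords_flag_eq0 (flag_vec_sub B ji) (leqnn _).
Qed.

End AdaptedFrame.

Lemma floor_mod (R : realType) (t h : R) : h != 0 ->
  exists c : int, 0 <= t - c%:~R * h < `|h|.
Proof.
move=> h_neq0; have h_gt0 : 0 < `|h| by rewrite normr_gt0.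
exists (Num.floor (t / `|h|) * sgz h).
rewrite intrM -sgrEz -mulrA -normrEsg subr_ge0 ltrBlDl -ler_pdivlMr //.
rewrite -[X in _ < _ + X]mul1r -mulrDl -ltr_pdivrMr //.
by have := floor_itv (t / `|h|); rewrite intrD.
Qed.

Section Packing.
Variables (R : realType) (d : nat) (B : 'M[R]_d).
Hypothesis B_unit : B \in unitmx.
Local Notation lat := (in_lattice B).
Local Notation flag := (flag B).
Local Notation flag_vec := (flag_vec B).
Local Notation flag_min := (flag_min B).
Local Notation coords := (coords B).

Lemma flag_level (z : 'rV[R]_d) : z != 0 ->
  exists2 j : 'I_d, (z <= flag j.+1)%MS & ~~ (z <= flag j)%MS.
Proof.
move=> z_neq0; have zd : exists n, (z <= flag n)%MS by exists d; apply: flag_full.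
case: (ex_minnP zd) => -[|j] zj j_min; first by rewrite submx0 (negPf z_neq0) in zj.
have jd : (j < d)%N by apply: j_min (flag_full _ _).
by exists (Ordinal jd) => //; apply/negP => /j_min; rewrite ltnn.
Qed.

Lemma lattice_coords_small_eq0 (z : 'rV[R]_d) : lat z ->
  (forall j : 'I_d, `|coords z 0 j| < flag_min j / d.+1%:R) -> z = 0.
Proof.
move=> lz small; apply/eqP; apply: contraT => /flag_level[j zj zNj].
have m_gt0 := flag_min_gt0 B_unit (ltn_ord j).
have coords_le i : `|coords z 0 i| <= flag_min j / d.+1%:R.
  have [ji | ij] := ltnP j i.
    by rewrite (coords_flag_eq0 B_unit zj ji) normr0 divr_ge0 ?ltW.
  rewrite ltW // (lt_le_trans (small i)) // ler_pM2r ?invr_gt0 ?ltr0n //.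
  exact: flag_min_mono.
have lt_m : (flag_min j / d.+1%:R) ^+ 2 *+ d < flag_min j ^+ 2.
  rewrite expr_div_n -mulr_natr -mulrA gtr_pMr ?exprn_gt0 //.
  rewrite mulrC ltr_pdivrMr ?exprn_gt0 ?ltr0n // mul1r -natrX ltr_nat.
  by rewrite expnS expn1; nia.
have m_le : flag_min j ^+ 2 <= enorm z ^+ 2.
  by rewrite lerXn2r ?nnegrE ?enorm_ge0 ?(ltW m_gt0) // (min_outside_le (conj lz zNj)).
have := enorm_sqr_le coords_le; rewrite (enorm_coords B_unit) => /(le_trans m_le).
by move=> /le_lt_trans /(_ lt_m); rewrite ltxx.
Qed.

Lemma reduce_coords n : (n <= d)%N -> forall x : 'rV[R]_d, exists w,
  [/\ lat w, (w <= flag n)%MS & forall j : 'I_d, (j < n)%N ->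
        0 <= coords (x - w) 0 j < `|coords (flag_vec j) 0 j|].
Proof.
elim: n => [|n IHn] nd x.
  by exists 0; split; [apply: in_lattice0 | apply: sub0mx | ].
pose j0 : 'I_d := Ordinal nd.
have [c cP] := floor_mod (coords x 0 j0) (flag_vec_coord_neq0 B_unit j0).
have [[lv _] _] := flag_vecP B_unit nd.
have [w [lw wn wP]] := IHn (ltnW nd) (x - c%:~R *: flag_vec n).
exists (c%:~R *: flag_vec n + w); split.
- by apply: in_latticeD => //; apply: in_latticeZ.
- apply: addmx_sub; first by rewrite scalemx_sub // flag_vec_sub.
  exact: submx_trans wn (flag_mono B (leqnSn n)).
move=> j; rewrite opprD addrA ltnS leq_eqVlt => /predU1P[jn | /wP //].
have -> : j = j0 by apply: val_inj.
by rewrite !coordsB coordsZ (coords_flag_eq0 B_unit wn) // subr0.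
Qed.

End Packing.

Lemma truncn_eq_dist_lt1 (R : realType) (a b : R) : 0 <= a -> 0 <= b ->
  Num.truncn a = Num.truncn b -> `|a - b| < 1.
Proof.
move=> /truncn_itv /andP[a_ge a_lt] /truncn_itv /andP[b_ge b_lt] eq_ab.
rewrite eq_ab -natr1 in a_ge a_lt; rewrite -natr1 in b_lt.
by rewrite ltr_norml; apply/andP; split; lra.
Qed.

Section Covering.
Variables (R : realType) (d n : nat) (B : 'M[R]_d).
Hypotheses (B_unit : B \in unitmx) (n_lt_d : (n < d)%N).
Hypothesis succ_min_d_le1 : succ_min B d <= 1.
Local Notation lat := (in_lattice B).
Local Notation flag := (flag B).
Local Notation flag_min := (flag_min B).
Local Notation coords := (coords B).
Implicit Types (x y : 'rV[R]_d).

Lemma flag_min_le1 (j : 'I_d) : flag_min j <= 1.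
Proof.
have d_gt0 : (0 < d)%N by apply: leq_ltn_trans n_lt_d.
have d_pred : (d.-1 < d)%N by rewrite prednK.
apply: le_trans (flag_min_mono B_unit _ d_pred) _; first by rewrite -ltnS prednK.
by apply: le_trans (flag_min_le_succ_min B_unit d_pred) _; rewrite prednK.
Qed.

Definition flag_part x : 'rV[R]_d :=
  xget 0 [set w | [/\ lat w, (w <= flag n)%MS & forall j : 'I_d, (j < n)%N ->
                       0 <= coords (x - w) 0 j < 2 * flag_min j]].

Definition residue x := x - flag_part x.

Lemma flag_partP x : [/\ lat (flag_part x), (flag_part x <= flag n)%MS &
  forall j : 'I_d, (j < n)%N -> 0 <= coords (residue x) 0 j < 2 * flag_min j].
Proof.
rewrite /residue /flag_part; case: xgetP => [w _ // | noP].
have [w [lw wn wP]] := reduce_coords B_unit (ltnW n_lt_d) x.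
case: (noP w); split => // j /wP /andP[-> lt_vj] /=.
have [_ vj_lt] := flag_vecP B_unit (ltn_ord j).
exact: lt_trans lt_vj (le_lt_trans (normr_coords_le B_unit _ _) vj_lt).
Qed.

(* The residue's j-th coordinate ranges over an interval of length
   [coord_width j] starting at 0 when [j < n] and at -1 otherwise. *)
Definition cell_scale (j : 'I_d) : R := d.+1%:R / flag_min j.
Definition coord_width (j : 'I_d) : R := if (j < n)%N then 2 * flag_min j else 2.
Definition cell_coord x (j : 'I_d) : R :=
  cell_scale j * (coords (residue x) 0 j + (j >= n)%N%:R).
Definition cell_bound (j : 'I_d) : R := cell_scale j * coord_width j.

Lemma cell_scale_gt0 j : 0 < cell_scale j.
Proof. by rewrite divr_gt0 ?ltr0n ?flag_min_gt0. Qed.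

Lemma cell_coord_range x j : enorm x <= 1 -> 0 <= cell_coord x j <= cell_bound j.
Proof.
move=> x_le1; rewrite /cell_coord /cell_bound /coord_width pmulr_rge0 ?cell_scale_gt0 //.
rewrite ler_pM2l ?cell_scale_gt0 // leqNgt; have [_ xn xP] := flag_partP x.
case: ltnP => [jn | nj] /=; first by rewrite addr0; have /andP[-> /ltW] := xP j jn.
rewrite /residue coordsB (coords_flag_eq0 B_unit xn nj) subr0.
by have := normr_coords_le B_unit x j; rewrite ler_norml; lra.
Qed.

Definition cell_type := {dffun forall j : 'I_d, 'I_(Num.truncn (cell_bound j)).+1}.

Definition cell x : cell_type := [ffun j => inord (Num.truncn (cell_coord x j))].

Lemma eq_cell_residue x y : lat x -> lat y -> enorm x <= 1 -> enorm y <= 1 ->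
  cell x = cell y -> residue x = residue y.
Proof.
move=> lx ly x_le1 y_le1 cell_xy; apply/eqP; rewrite -subr_eq0; apply/eqP.
have [lpx _ _] := flag_partP x; have [lpy _ _] := flag_partP y.
apply: (lattice_coords_small_eq0 B_unit); first by do !apply: in_latticeB.
move=> j; have /andP[x_ge0 x_le] := cell_coord_range j x_le1.
have /andP[y_ge0 y_le] := cell_coord_range j y_le1.
have : `|cell_coord x j - cell_coord y j| < 1.
  apply: truncn_eq_dist_lt1 => //.
  move/(congr1 (fun t : cell_type => val (t j))): cell_xy.
  by rewrite !ffunE /= !inordK // ltnS le_truncn.
rewrite /cell_coord -mulrBr opprD addrACA subrr addr0 -coordsB normrM.
by rewrite gtr0_norm ?cell_scale_gt0 // -ltr_pdivlMl ?cell_scale_gt0 // mulr1 invf_div.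
Qed.

Definition span_with y : 'M[R]_d :=
  if (y <= flag n)%MS then flag n.+1 else (flag n + y)%MS.

Lemma rank_span_with y : \rank (span_with y) = n.+1.
Proof.
rewrite /span_with; case: ifPn => yn; first by rewrite flag_rank.
by rewrite mxrank_addsmx_notsub // flag_rank // ltnW.
Qed.

Lemma span_withS y : (flag n <= span_with y)%MS && (y <= span_with y)%MS.
Proof.
rewrite /span_with; case: ifPn => yn; last by rewrite addsmxSl addsmxSr.
by rewrite flag_mono // (submx_trans yn) // flag_mono.
Qed.

(* An empty cell gets the junk representative 0 and contributes a useless space. *)
Definition cell_rep (t : cell_type) : 'rV[R]_d :=
  xget 0 [set x | [/\ lat x, enorm x <= 1 & cell x = t]].

Definition cover_family : seq 'M[R]_d :=
  [seq span_with (residue (cell_rep t)) | t <- enum cell_type].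

Lemma cover_familyP : covers_ball n.+1 B cover_family.
Proof.
split=> [_ /mapP[t _ ->] | v lv v_le1]; first exact: rank_span_with.
exists (span_with (residue (cell_rep (cell v)))).
  by apply: (map_f (fun t => span_with (residue (cell_rep t)))); rewrite mem_enum.
have [lx x_le1 cell_x] : [/\ lat (cell_rep (cell v)), enorm (cell_rep (cell v)) <= 1
    & cell (cell_rep (cell v)) = cell v].
  by apply: (@xgetPex _ 0 [set x | [/\ lat x, enorm x <= 1 & cell x = cell v]]); exists v.
rewrite (eq_cell_residue lx lv x_le1 v_le1 cell_x) -{1}(subrK (flag_part v) v).
have [_ pn _] := flag_partP v; have /andP[nS vS] := span_withS (residue v).
by rewrite addmx_sub // (submx_trans pn nS).
Qed.

Definition cell_count_const : R := 2 * (2 * d.+1%:R + 1).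

Definition minima_weight (j : nat) : R := if (j < n)%N then 1 else succ_min B j.+1.

Lemma card_cell_axis j :
  (Num.truncn (cell_bound j)).+1%:R <= cell_count_const / minima_weight j.
Proof.
have m_gt0 := flag_min_gt0 B_unit (ltn_ord j).
have D_gt0 : 0 < d.+1%:R :> R by rewrite ltr0n.
have bound_ge0 : 0 <= cell_bound j.
  rewrite mulr_ge0 ?ltW ?cell_scale_gt0 // /coord_width.
  by case: ifP => _; rewrite ?mulr_gt0.
apply: (@le_trans _ _ (cell_bound j + 1)); first by rewrite -natr1 lerD2r truncn_le.
rewrite /cell_bound /coord_width /cell_scale /minima_weight /cell_count_const.
case: ifP => _; first by rewrite divr1 mulrA mulrAC divfK ?gt_eqF //; lra.
have lam_gt0 : 0 < succ_min B j.+1.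
  exact: lt_le_trans m_gt0 (flag_min_le_succ_min B_unit (ltn_ord j)).
have inv_m_ge1 : 1 <= (flag_min j)^-1 by rewrite invf_ge1 // flag_min_le1.
have inv_m_le : (flag_min j)^-1 <= 2 * (succ_min B j.+1)^-1.
  by rewrite ler_pdivlMr // mulrC ler_pdivrMr // succ_min_le_flag_min.
rewrite -mulrA; nra.
Qed.

Lemma prod_minima_weight :
  \prod_(j < d) minima_weight j = \prod_(n.+1 <= i < d.+1) succ_min B i.
Proof.
rewrite -(big_mkord xpredT) (@big_cat_nat _ _ _ n) ?(ltnW n_lt_d) //=.
rewrite big_nat_cond big1 ?mul1r => [|j /andP[/andP[_ jn] _]]; last first.
  by rewrite /minima_weight jn.
rewrite big_add1 /=; apply: eq_big_nat => i /andP[ni _].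
by rewrite /minima_weight ltnNge ni.
Qed.

Lemma size_cover_family : (size cover_family)%:R <=
  cell_count_const ^+ d / \prod_(n.+1 <= i < d.+1) succ_min B i.
Proof.
rewrite size_map -cardE card_dep_ffun foldrE big_map big_enum /= natr_prod.
rewrite -prod_minima_weight -prodfV -[d in cell_count_const ^+ d]card_ord -prodr_const.
rewrite -big_split /=; apply: ler_prod => j _; rewrite ler0n card_ord.
exact: card_cell_axis.
Qed.

End Covering.

Theorem corollary3 (R : realType) (d k : nat) :
  (1 <= k)%N -> (k <= d - 1)%N ->
  exists C : R, forall B : 'M[R]_d,
    lattice_basis B -> succ_min B d <= 1 ->
    exists S : seq 'M[R]_d, covers_ball k B S /\
      (size S)%:R <= C / \prod_(k <= i < d.+1) succ_min B i.
Proof.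
move=> k_gt0 k_le; have kd : (k.-1 < d)%N by rewrite prednK //; lia.
exists (cell_count_const R d ^+ d) => B B_unit lam_d_le1.
exists (cover_family k.-1 B); rewrite -(prednK k_gt0); split.
  exact: cover_familyP B_unit kd.
exact: size_cover_family B_unit kd lam_d_le1.
Qed.
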